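(* Let $n,N\in\mathbb N$, $I=\{1,\dots,n\}$, $J=\{1,\dots,N\}$, $G$ a nonempty finite set of maps $I\to J$ with normalized counting measure $\mathbb P$ and expectation $\mathbb E$, such that $\mathbb P(\{g\in G:g(i)=j\})=1/N$ for all $i\in I$, $j\in J$. Let $a\in\mathbb R^{n\times N}$. Then for every integer $1\le\ell\le n$, $$\mathbb E\sum_{k=1}^{\ell}\operatorname{k\text{-}max}_{1\le i\le n}|a_{ig(i)}|\le\frac2N\|a\|_{M_{\ell N}},$$ where $a$ is regarded as a vector in $\mathbb R^{nN}$ and $M_{\ell N}(t)=0$ for $0\le t\le 1/(\ell N)$, $M_{\ell N}(t)=t-1/(\ell N)$ for $t>1/(\ell N)$.
   Context: $\mathbb P(E)=|E|/|G|$ for $E\subseteq G$. For a vector $x$ with non-negative entries, $\operatorname{k\text{-}max}_{1\le i\le n}x_i$ denotes its $k$-th largest entry counted with multiplicity. For an Orlicz function $M$ (a convex, non-constant function $M:[0,\infty)\to[0,\infty)$ with $M(0)=0$), the Luxemburg norm on $\mathbb R^m$ is $\|x\|_M=\inf\{\lambda>0:\sum_{i=1}^mM(|x_i|/\lambda)\le1\}$. *)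

From HB Require Import structures.
From mathcomp Require Import all_boot all_order all_algebra.
Set Implicit Arguments. Unset Strict Implicit. Unset Printing Implicit Defensive.
Import Order.TTheory GRing.Theory Num.Theory.
Local Open Scope ring_scope.

Definition Prob (R : realFieldType) (T : finType) (G E : {set T}) : R :=
  #|E|%:R / #|G|%:R.

Definition Expect (R : realFieldType) (T : finType) (G : {set T}) (f : T -> R) : R :=
  (\sum_(g in G) f g) / #|G|%:R.

(* k-th largest entry (counted with multiplicity), k >= 1. *)
Definition kmax (R : realFieldType) (n : nat) (k : nat) (x : 'I_n -> R) : R :=
  nth 0 (sort (fun u v : R => v <= u) [seq x i | i <- enum 'I_n]) k.-1.

Definition M_lN (R : realFieldType) (l N : nat) (t : R) : R :=
  if t <= 1 / (l * N)%:R then 0 else t - 1 / (l * N)%:R.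

(* Feasible lambdas in the Luxemburg norm of a (as a vector in R^{mN}). *)
Definition lux_feasible (R : realFieldType) (m N : nat) (M : R -> R)
    (a : 'M[R]_(m, N)) (lam : R) : Prop :=
  0 < lam /\ \sum_(i < m) \sum_(j < N) M (`|a i j| / lam) <= 1.

Definition is_luxemburg_norm (R : realFieldType) (m N : nat) (M : R -> R)
    (a : 'M[R]_(m, N)) (x : R) : Prop :=
  (forall lam, lux_feasible M a lam -> x <= lam) /\
  (forall y, (forall lam, lux_feasible M a lam -> y <= lam) -> y <= x).

(* Fix a feasible [lam] and put [c = 1/(lN)], so that [t <= lam c + lam M_lN (t/lam)]
   for all [t].  Bounding each of the [l] largest entries this way and adding the
   nonnegative remaining terms gives
   [sum_{k <= l} k-max_i |a_{i g(i)}| <= l lam c + lam sum_i M_lN (|a_{i g(i)}| / lam)].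
   Since every [g(i)] is uniformly distributed on [J], the expectation of the last sum is
   [(lam/N) sum_{i,j} M_lN (|a_ij| / lam) <= lam/N], and [l lam c = lam/N] as well.
   Taking the infimum over feasible [lam] gives the Luxemburg norm. *)
From HB Require Import structures.
From mathcomp Require Import all_boot all_order all_algebra.
From mathcomp Require Import ring.
Set Implicit Arguments.
Unset Strict Implicit.
Unset Printing Implicit Defensive.
Import Order.TTheory GRing.Theory Num.Theory.
Local Open Scope ring_scope.

Lemma sum_kmax_le (R : realFieldType) (n l : nat) (x : 'I_n -> R) (c : R)
    (p : R -> R) (p_ge0 : forall t, 0 <= p t) (le_cp : forall t, t <= c + p t) :
    (l <= n)%N ->
  \sum_(1 <= k < l.+1) kmax k x <= l%:R * c + \sum_i p (x i).
Proof.
move=> hln; rewrite /kmax; set s := sort _ _.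
have size_s : size s = n by rewrite size_sort size_map size_enum_ord.
have sum_ps : \sum_i p (x i) = \sum_(v <- s) p v.
  rewrite (perm_big _ (permEl (perm_sort _ _))) big_map big_enum /=.
  by apply: eq_bigl => i; rewrite inE.
rewrite big_add1 /= big_mkord.
apply: (le_trans (ler_sum _ (fun (k : 'I_l) _ => le_cp (nth 0 s k)))).
rewrite big_split /= sumr_const card_ord mulr_natl lerD2l sum_ps (big_nth 0) size_s.
rewrite -(big_mkord xpredT (fun k => p (nth 0 s k))).
rewrite (@big_cat_nat _ _ _ l 0 n _ _ (leq0n l) hln) /=.
by rewrite lerDl sumr_ge0.
Qed.

Lemma M_lN_ge0 (R : realFieldType) (l N : nat) (t : R) : 0 <= M_lN l N t.
Proof.
by rewrite /M_lN; case: ifP => // /negbT; rewrite -ltNge subr_ge0 => /ltW.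
Qed.

Lemma le_M_lN (R : realFieldType) (l N : nat) (t : R) :
  t <= 1 / (l * N)%:R + M_lN l N t.
Proof. by rewrite /M_lN; case: ifP => [h | _]; rewrite ?addr0 // addrC subrK. Qed.

Lemma luxemburg_norm_ge (R : realFieldType) (m N : nat) (M : R -> R)
    (a : 'M[R]_(m, N)) (x y C : R) :
    is_luxemburg_norm M a x -> 0 < C ->
    (forall lam, lux_feasible M a lam -> y <= C * lam) ->
  y <= C * x.
Proof.
move=> [_ x_ge_lb] C_gt0 y_le; rewrite -ler_pdivrMl //.
by apply: x_ge_lb => lam /y_le; rewrite ler_pdivrMl.
Qed.

Section Expectation.

Variables (R : realFieldType) (T : finType) (G : {set T}).

Lemma Expect_le (f h : T -> R) :
  (forall g, g \in G -> f g <= h g) -> Expect G f <= Expect G h.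
Proof. by move=> le_fh; rewrite ler_wpM2r ?invr_ge0 // ler_sum. Qed.

Lemma ExpectD (f h : T -> R) :
  Expect G (fun g => f g + h g) = Expect G f + Expect G h.
Proof. by rewrite /Expect big_split mulrDl. Qed.

Lemma Expect_sum (I : finType) (F : I -> T -> R) :
  Expect G (fun g => \sum_i F i g) = \sum_i Expect G (F i).
Proof. by rewrite /Expect exchange_big mulr_suml. Qed.

Hypothesis G_neq0 : G != set0.

Lemma card_G_neq0 : #|G|%:R != 0 :> R.
Proof. by rewrite pnatr_eq0 -lt0n card_gt0. Qed.

Lemma Expect_cst (c : R) : Expect G (fun => c) = c.
Proof. by rewrite /Expect sumr_const -[c *+ _]mulr_natr mulfK ?card_G_neq0. Qed.

End Expectation.

Section UniformCoordinates.

Variables (R : realFieldType) (n N : nat) (G : {set {ffun 'I_n -> 'I_N}}).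
Hypothesis G_neq0 : G != set0.
Hypothesis coord_uniform : forall (i : 'I_n) (j : 'I_N),
  Prob R G [set g in G | g i == j] = 1 / N%:R.

Lemma card_coord_eq (i : 'I_n) (j : 'I_N) :
  #|[set g in G | g i == j]|%:R = #|G|%:R / N%:R :> R.
Proof.
have := coord_uniform i j; rewrite /Prob => /(congr1 ( *%R^~ #|G|%:R)).
by rewrite divfK ?card_G_neq0 // mul1r mulrC.
Qed.

Lemma Expect_coord (i : 'I_n) (f : 'I_N -> R) :
  Expect G (fun g => f (g i)) = (\sum_j f j) / N%:R.
Proof.
rewrite /Expect (partition_big (fun g : {ffun 'I_n -> 'I_N} => g i) xpredT) //=.
have fiber j : \sum_(g in G | g i == j) f (g i) = #|G|%:R / N%:R * f j.
  rewrite (eq_bigr (fun => f j)) => [|g /andP [_ /eqP ->] //].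
  rewrite sumr_const -[f j *+ _]mulr_natl -(card_coord_eq i j).
  by congr (_%:R * _); apply: eq_card => g; rewrite inE.
rewrite (eq_bigr _ (fun j _ => fiber j)) -mulr_sumr.
by rewrite [LHS]mulrAC (mulrAC #|G|%:R) mulfV ?card_G_neq0 // mul1r mulrC.
Qed.

Lemma Expect_sum_kmax_le (a : 'M[R]_(n, N)) (l : nat) (lam : R) :
    (1 <= l <= n)%N -> lux_feasible (@M_lN R l N) a lam ->
  Expect G (fun g => \sum_(1 <= k < l.+1) kmax k (fun i => `|a i (g i)|))
    <= 2 / N%:R * lam.
Proof.
move=> /andP [l_gt0 hln] [lam_gt0 sum_le1].
set c : R := 1 / (l * N)%:R.
set S := \sum_(i < n) \sum_(j < N) M_lN l N (`|a i j| / lam).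
pose q t := lam * M_lN l N (t / lam).
have lam_c : l%:R * (lam * c) = lam / N%:R.
  rewrite /c natrM; have [-> | N_neq0] := eqVneq N 0%N.
    by rewrite !mulr0 !invr0 !mulr0.
  by field; rewrite !pnatr_eq0 N_neq0 -lt0n l_gt0.
have le_c_q t : t <= lam * c + q t.
  rewrite -mulrDr -ler_pdivrMl // mulrC; exact: le_M_lN.
have q_ge0 t : 0 <= q t by rewrite mulr_ge0 ?M_lN_ge0 ?ltW.
have le_sum (g : {ffun 'I_n -> 'I_N}) :
    \sum_(1 <= k < l.+1) kmax k (fun i => `|a i (g i)|)
      <= l%:R * (lam * c) + \sum_i q `|a i (g i)|.
  exact: sum_kmax_le.
apply: le_trans (Expect_le (fun g _ => le_sum g)) _.
rewrite ExpectD Expect_cst // Expect_sum lam_c.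
under eq_bigr => i _ do rewrite (Expect_coord i (fun j => q `|a i j|)) -mulr_sumr mulrAC.
rewrite -mulr_sumr -/S.
have lamS : lam / N%:R * S <= lam / N%:R.
  by apply: ler_piMr => //; apply: divr_ge0; rewrite ?ler0n ?ltW.
have -> : 2 / N%:R * lam = lam / N%:R + lam / N%:R by ring.
by rewrite lerD2l.
Qed.

End UniformCoordinates.

Theorem proposition4p2 (R : realFieldType) (n N : nat)
  (G : {set {ffun 'I_n -> 'I_N}}) (HG : G != set0)
  (Hunif : forall (i : 'I_n) (j : 'I_N),
      Prob R G [set g in G | g i == j] = 1 / N%:R)
  (a : 'M[R]_(n, N)) (l : nat) (hl1 : (1 <= l)%N) (hln : (l <= n)%N)
  (x : R) (hx : is_luxemburg_norm (@M_lN R l N) a x) :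
  Expect G (fun g => \sum_(1 <= k < l.+1) kmax k (fun i => `|a i (g i)|))
    <= 2 / N%:R * x.
Proof.
have N_gt0 : (0 < N)%N.
  have [g _] := set0Pn _ HG.
  exact: leq_ltn_trans (leq0n _) (ltn_ord (g (Ordinal (leq_trans hl1 hln)))).
apply: (luxemburg_norm_ge hx); first by rewrite divr_gt0 ?ltr0n.
by move=> lam; apply: (Expect_sum_kmax_le HG Hunif); rewrite hl1.
Qed.
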